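(* Let $d_G$ be a generalized distance on graphs (for example the shortest-path distance), and consider graphs with at most $n$ nodes. A Powerful Plain Graph Transformer (PPGT) whose graph positional encoding is given by $d_G$ is as powerful as the GD-WL test with distance $d_G$ in distinguishing non-isomorphic graphs, i.e., for every pair of graphs with at most $n$ nodes that GD-WL distinguishes there is a PPGT that distinguishes them, provided the functions $\phi$ and $\theta$ in its attention are chosen appropriately and the numbers of attention heads and layers are sufficiently large.
   Context: Graphs $G=(\mathcal V,\mathcal E)$ are finite. A generalized distance assigns to every pair of nodes $u,v$ of a graph $G$ a value $d_G(u,v)$ (e.g. shortest-path distance, resistance distance), invariant under graph isomorphism. GD-WL test: starting from initial node colors $\chi^0_G(v)$, iterate $\chi^{\ell}_G(v)=\mathrm{hash}(\{\!\{(d_G(v,u),\chi^{\ell-1}_G(u)) : u\in\mathcal V\}\!\})$, where $\{\!\{\cdot\}\!\}$ denotes a multiset and hash is injective; after $L$ iterations the graph color is the hash of the multiset $\{\!\{\chi^L_G(v): v\in\mathcal V\}\!\}$. GD-WL distinguishes two graphs if their graph colors differ. PPGT: each node $i$ is a token $x_i\in\mathbb R^D$ (initialized from node attributes), and each node pair $(i,j)$ carries a relative positional embedding $p_{ij}$ computed from the positional encoding (here from $d_G(i,j)$) by an MLP-based stem. Each layer is a pre-norm Transformer block: $\hat X = X + \mathrm{MSA}(\mathrm{Norm}(X),P)$, $X' = \hat X + \mathrm{MLP}(\mathrm{Norm}(\hat X))$, where MLP is a two-layer perceptron and Norm is a token-wise normalization. In each head $h$ of the multihead self-attention MSA, with queries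 $q_i=W_Q^h x_i$, keys $k_j=W_K^h x_j$, values $W_V^h x_j$, the attention weights are $\alpha_{ij}=\phi^h(p_{ij})\cdot \mathrm{Softmax}_j\big(\tfrac{q_i^\top k_j}{\sqrt D}-\tfrac{k_j^\top k_j}{2\sqrt D}+\theta^h(p_{ij})\big)$, with $\mathrm{Softmax}_j(a_{ij})=\exp(a_{ij})/\sum_{j'}\exp(a_{ij'})$ over all nodes $j'$ of the graph, and the head output at node $i$ is $\sum_j \alpha_{ij} W_O^h W_V^h x_j$; head outputs are summed/concatenated. A graph-level output is obtained by sum pooling of final node representations followed by an MLP. A PPGT distinguishes two graphs if its graph-level outputs differ. *)

From HB Require Import structures.
From mathcomp Require Import all_boot all_order all_algebra.
From mathcomp Require Import reals sequences exp.
Set Implicit Arguments. Unset Strict Implicit. Unset Printing Implicit Defensive.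
Import Order.TTheory GRing.Theory Num.Theory.
Local Open Scope ring_scope.

Section PPGT.
Variable R : realType.

Record graph (N : nat) := Graph {
  adj : rel 'I_N;
  adj_sym : symmetric adj;
  adj_irr : irreflexive adj }.
Arguments adj {N} g _ _.

Definition graph_iso (N M : nat) (G : graph N) (H : graph M) (s : 'I_N -> 'I_M) :=
  bijective s /\ forall u v, adj H (s u) (s v) = adj G u v.

Definition gdist := forall N : nat, graph N -> 'I_N -> 'I_N -> R.

Definition is_gen_dist (d : gdist) :=
  forall N M (G : graph N) (H : graph M) (s : 'I_N -> 'I_M),
    graph_iso G H s -> forall u v, d M H (s u) (s v) = d N G u v.

Record agraph (k : nat) := AGraph {
  ag_n : nat;
  ag_g : graph ag_n;
  ag_x : 'I_ag_n -> 'rV[R]_k }.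
Arguments ag_x {k} a _.
Arguments ag_g {k} a.
Arguments ag_n {k} a.

(* wl_same d G1 G2 l u v  <->  chi^l_{G1}(u) = chi^l_{G2}(v).
   Since hash is injective, equal colors at level l+1 means equal multisets
   {{(d(u,w), chi^l(w)) : w}}, i.e. a bijection between node sets matching
   the pairs. *)
Fixpoint wl_same (d : gdist) (k : nat) (G1 G2 : agraph k) (l : nat)
    (u : 'I_(ag_n G1)) (v : 'I_(ag_n G2)) {struct l} : Prop :=
  match l with
  | 0 => ag_x G1 u = ag_x G2 v
  | l'.+1 => exists s : 'I_(ag_n G1) -> 'I_(ag_n G2),
      bijective s /\
      forall w, d _ (ag_g G1) u w = d _ (ag_g G2) v (s w) /\ wl_same d l' w (s w)
  end.

Definition wl_graph_same (d : gdist) (k : nat) (G1 G2 : agraph k) (L : nat) :=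
  exists s : 'I_(ag_n G1) -> 'I_(ag_n G2), bijective s /\ forall v, @wl_same d k G1 G2 L v (s v).

Definition gdwl_distinguishes (d : gdist) (k : nat) (G1 G2 : agraph k) :=
  exists L : nat, ~ wl_graph_same d G1 G2 L.

Definition relu_v (m : nat) (x : 'rV[R]_m) : 'rV[R]_m := map_mx (fun t => Num.max t 0) x.

Record mlp2 (a h b : nat) := MLP2 {
  mW1 : 'M[R]_(a, h); mb1 : 'rV[R]_h; mW2 : 'M[R]_(h, b); mb2 : 'rV[R]_b }.

Definition mlp_apply (a h b : nat) (f : mlp2 a h b) (x : 'rV[R]_a) : 'rV[R]_b :=
  relu_v (x *m mW1 f + mb1 f) *m mW2 f + mb2 f.

Record lnorm (D : nat) := LNorm {
  ln_gamma : 'rV[R]_D; ln_beta : 'rV[R]_D; ln_eps : R; ln_eps_gt0 : 0 < ln_eps }.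

Definition ln_apply (D : nat) (p : lnorm D) (x : 'rV[R]_D) : 'rV[R]_D :=
  let mu := (\sum_(i < D) x 0 i) / D%:R in
  let var := (\sum_(i < D) (x 0 i - mu) ^+ 2) / D%:R in
  \row_(i < D) ((x 0 i - mu) / Num.sqrt (var + ln_eps p) * ln_gamma p 0 i + ln_beta p 0 i).

(* one attention head: D model dim, Dp dim of relative PE, Dk key dim, Dv value dim *)
Record head (D Dp Dk Dv : nat) := Head {
  hWQ : 'M[R]_(D, Dk); hWK : 'M[R]_(D, Dk);
  hWV : 'M[R]_(D, Dv); hWO : 'M[R]_(Dv, D);
  hphi : 'rV[R]_Dp -> R; htheta : 'rV[R]_Dp -> R }.

Definition dotr (m : nat) (x y : 'rV[R]_m) : R := (x *m y^T) 0 0.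

Definition head_apply (D Dp Dk Dv N : nat) (hd : head D Dp Dk Dv)
    (Y : 'I_N -> 'rV[R]_D) (P : 'I_N -> 'I_N -> 'rV[R]_Dp) (i : 'I_N) : 'rV[R]_D :=
  let q := Y i *m hWQ hd in
  let key j := Y j *m hWK hd in
  let sD := Num.sqrt (D%:R : R) in
  let a j := dotr q (key j) / sD - dotr (key j) (key j) / (2 * sD) + htheta hd (P i j) in
  \sum_(j < N) ((hphi hd (P i j) * (expR (a j) / \sum_(j' < N) expR (a j')))
                  *: (Y j *m hWV hd *m hWO hd)).

Record layer (D Dp Dk Dv Dh : nat) := Layer {
  lnorm1 : lnorm D;
  lheads : seq (head D Dp Dk Dv);
  lnorm2 : lnorm D;
  lffn : mlp2 D Dh D }.

Definition layer_apply (D Dp Dk Dv Dh N : nat) (ly : layer D Dp Dk Dv Dh)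
    (P : 'I_N -> 'I_N -> 'rV[R]_Dp) (X : 'I_N -> 'rV[R]_D) : 'I_N -> 'rV[R]_D :=
  let Y i := ln_apply (lnorm1 ly) (X i) in
  let Xh i := X i + \sum_(hd <- lheads ly) head_apply hd Y P i in
  fun i => Xh i + mlp_apply (lffn ly) (ln_apply (lnorm2 ly) (Xh i)).

Record ppgt (k : nat) := PPGT {
  pD : nat; pDp : nat; pDk : nat; pDv : nat; pDh : nat;
  pDs : nat; pDr : nat; pDout : nat;
  pembed : 'M[R]_(k, pD);
  pstem : mlp2 1 pDs pDp;
  players : seq (layer pD pDp pDk pDv pDh);
  preadout : mlp2 pD pDr pDout }.

Definition ppgt_output (d : gdist) (k : nat) (M : ppgt k) (G : agraph k) : 'rV[R]_(pDout M) :=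
  let N := ag_n G in
  let P (i j : 'I_N) := mlp_apply (pstem M) (\row_(_ < 1) d N (ag_g G) i j) in
  let X0 (i : 'I_N) := ag_x G i *m pembed M in
  let XL := foldl (fun X ly => layer_apply ly P X) X0 (players M) in
  mlp_apply (preadout M) (\sum_(i < N) XL i).

Definition ppgt_distinguishes (d : gdist) (k : nat) (M : ppgt k) (G1 G2 : agraph k) :=
  ppgt_output d M G1 <> ppgt_output d M G2.

End PPGT.

(* Tokens are kept on the line spanned by (1, -1).  There LayerNorm with gamma = 1,
   beta = 0, eps = 1 is the bijection z |-> z / sqrt (z^2 + 1), and a ReLU perceptron can
   realize any function on finitely many points.  For graphs on N nodes let B = N + 1; a
   GD-WL color c < C is stored as the token whose normalization is B^c / (2 B^C).  With
   zero queries and keys the attention is uniform, and with phi (d) proportional to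
   B^(C * index d) the head adds to the token of u the natural number
   sum_w B^(C * index d(u,w) + c_w); having fewer than B summands, its base-B digits are
   the multiplicities of the pairs (d(u,w), c_w).  As the old token lies in [0, 1), the
   new one determines this number, and the feed-forward block re-encodes it as a fresh
   color.  Node attributes enter through an injective linear projection (a moment
   vector), and after L layers sum pooling of B^color determines the multiset of final
   colors.  Graphs of different sizes are told apart by counting nodes. *)

From Pilot Require Import Defs.
From HB Require Import structures.
From mathcomp Require Import all_boot all_order all_algebra.
From mathcomp Require Import reals sequences exp.
From mathcomp Require Import perm ring lra.
From Stdlib Require Import FunctionalExtensionality.
Set Implicit Arguments. Unset Strict Implicit. Unset Printing Implicit Defensive.
Import Order.TTheory GRing.Theory Num.Theory.
Local Open Scope ring_scope.

Section ReluInterpolation.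
Variable R : realFieldType.

Definition relu (t : R) := Num.max t 0.

Lemma relu_id t : 0 <= t -> relu t = t.
Proof. exact: max_l. Qed.

Lemma relu_eq0 t : t <= 0 -> relu t = 0.
Proof. exact: max_r. Qed.

Definition relu_sum (c0 : R) (ps : seq (R * R)) (y : R) :=
  c0 + \sum_(p <- ps) p.1 * relu (y - p.2).

Lemma relu_sum_cat c0 ps qs y :
  relu_sum c0 (ps ++ qs) y = relu_sum c0 ps y + relu_sum 0 qs y.
Proof. by rewrite /relu_sum big_cat /= add0r addrA. Qed.

Lemma relu_sum_scale a ps y :
  relu_sum 0 [seq (a * p.1, p.2) | p <- ps] y = a * relu_sum 0 ps y.
Proof. by rewrite /relu_sum !add0r big_map mulr_sumr; apply: eq_bigr => p _ /=; ring. Qed.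

(* The piecewise-linear hat of height 1 at x0 supported on ]x0 - del, x0 + del[. *)
Definition hat (x0 del : R) :=
  [:: (del^-1, x0 - del); (- (2 * del^-1), x0); (del^-1, x0 + del)].

Lemma hat_center x0 del : 0 < del -> relu_sum 0 (hat x0 del) x0 = 1.
Proof.
move=> del_gt0; rewrite /relu_sum /hat !big_cons big_nil /=.
rewrite (@relu_id (x0 - (x0 - del))) ?(@relu_eq0 (x0 - x0))
  ?(@relu_eq0 (x0 - (x0 + del))); try lra.
by field; lra.
Qed.

Lemma hat_outside x0 del y :
  0 < del -> del <= `|y - x0| -> relu_sum 0 (hat x0 del) y = 0.
Proof.
move=> del_gt0; rewrite /relu_sum /hat !big_cons big_nil /=.
have [y_ge|y_lt] := lerP 0 (y - x0).
  rewrite ger0_norm // => far.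
  by rewrite !relu_id; try lra; field; lra.
rewrite ltr0_norm // => far.
by rewrite !relu_eq0; lra.
Qed.

Lemma exists_sep_radius (x0 : R) (xs : seq R) :
  x0 \notin xs -> exists2 del, 0 < del & forall x, x \in xs -> del <= `|x - x0|.
Proof.
elim: xs => [|a xs IH] /=; first by exists 1.
rewrite in_cons negb_or => /andP[a_neq /IH[del del_gt0 far]].
exists (Num.min del `|a - x0|); first by rewrite lt_min del_gt0 normr_gt0 subr_eq0 eq_sym.
by move=> x; rewrite in_cons ge_min => /orP[/eqP->|/far->]; rewrite ?lexx ?orbT.
Qed.

(* Each new point gets a hat, scaled to correct the value there and narrower than its gap
   to the other points. *)
Lemma relu_sum_interpolation (f : R -> R) (xs : seq R) :
  exists c0 ps, (size ps <= 3 * size xs)%N /\ {in xs, relu_sum c0 ps =1 f}.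
Proof.
elim: xs => [|x0 xs [c0 [ps [size_ps interp]]]]; first by exists 0, [::].
have [x0_in|x0_notin] := boolP (x0 \in xs).
  exists c0, ps; split; first by rewrite mulnS (leq_trans size_ps) ?leq_addl.
  by move=> x; rewrite in_cons => /orP[/eqP->|]; apply: interp.
have [del del_gt0 far] := exists_sep_radius x0_notin.
pose err := f x0 - relu_sum c0 ps x0.
exists c0, (ps ++ [seq (err * p.1, p.2) | p <- hat x0 del]); split.
  by rewrite size_cat size_map /= mulnS addnC leq_add2l.
move=> x; rewrite relu_sum_cat relu_sum_scale in_cons => /orP[/eqP->|x_in].
  by rewrite hat_center // mulr1 addrC subrK.
by rewrite hat_outside ?far // mulr0 addr0 interp.
Qed.

Lemma relu_interpolation_ord (f : R -> R) (xs : seq R) H : (3 * size xs <= H)%N ->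
  exists c0 (c t : 'I_H -> R),
    {in xs, forall x, c0 + \sum_(j < H) c j * relu (x - t j) = f x}.
Proof.
move=> size_H; have [c0 [ps [size_ps interp]]] := relu_sum_interpolation f xs.
pose qs := ps ++ nseq (H - size ps) (0, 0).
have size_qs : size qs = H by rewrite size_cat size_nseq subnKC // (leq_trans size_ps).
exists c0, (fun j => (nth (0, 0) qs j).1), (fun j => (nth (0, 0) qs j).2) => x x_in.
rewrite -(interp x x_in) /relu_sum; congr (_ + _).
rewrite -(big_mkord xpredT (fun j => (nth (0, 0) qs j).1 * relu (x - (nth (0, 0) qs j).2))).
rewrite -{1}size_qs -(big_nth (0, 0) xpredT (fun p => p.1 * relu (x - p.2))) big_cat /=.
by rewrite [X in _ + X]big1_seq ?addr0 // => p /andP[_ /nseqP[-> _]] /=; rewrite mul0r.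
Qed.

End ReluInterpolation.

Section Squash.
Variable R : rcfType.

Definition squash (z : R) := z / Num.sqrt (z ^+ 2 + 1).
Definition unsquash (y : R) := y / Num.sqrt (1 - y ^+ 2).

Lemma sqrt_sqr_inv (s : R) : 0 < s -> Num.sqrt (s^-1 ^+ 2) = s^-1.
Proof. by move=> s_gt0; rewrite sqrtr_sqr gtr0_norm // invr_gt0. Qed.

Lemma squashK : cancel squash unsquash.
Proof.
move=> z; rewrite /unsquash /squash.
set s := Num.sqrt (z ^+ 2 + 1).
have s_gt0 : 0 < s by rewrite sqrtr_gt0 ltr_wpDl ?sqr_ge0.
have s2 : s ^+ 2 = z ^+ 2 + 1 by rewrite sqr_sqrtr // addr_ge0 ?sqr_ge0.
have -> : 1 - (z / s) ^+ 2 = s^-1 ^+ 2.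
  by rewrite expr_div_n -[z ^+ 2](addrK 1) -s2; field; rewrite gt_eqF.
by rewrite sqrt_sqr_inv //; field; rewrite gt_eqF.
Qed.

Lemma unsquashK y : `|y| < 1 -> squash (unsquash y) = y.
Proof.
move=> y_lt1; rewrite /unsquash /squash.
set s := Num.sqrt (1 - y ^+ 2).
have y2 : 0 < 1 - y ^+ 2 by rewrite subr_gt0 -real_normK ?num_real // exprn_ilt1.
have s_gt0 : 0 < s by rewrite sqrtr_gt0.
have s2 : s ^+ 2 = 1 - y ^+ 2 by rewrite sqr_sqrtr // ltW.
have -> : (y / s) ^+ 2 + 1 = s^-1 ^+ 2.
  by rewrite expr_div_n -[y ^+ 2]opprK -[- y ^+ 2](addKr 1) -s2; field; rewrite gt_eqF.
by rewrite sqrt_sqr_inv //; field; rewrite gt_eqF.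
Qed.

End Squash.
Arguments squash {R}.
Arguments unsquash {R}.

Section LineTokens.
Variable R : realType.

Definition line_dir : 'rV[R]_2 := \row_(i < 2) (if i == ord0 then 1 else -1).

Definition line_norm : lnorm R 2 := LNorm (const_mx 1) 0 ltr01.

Lemma line_norm_apply z : ln_apply line_norm (z *: line_dir) = squash z *: line_dir.
Proof.
rewrite /ln_apply /= !big_ord_recr !big_ord0 /= !mxE /= !add0r.
have -> : z * 1 + z * -1 = 0 by ring.
have -> : ((z * 1 - 0 / 2) ^+ 2 + (z * -1 - 0 / 2) ^+ 2) / 2 = z ^+ 2 by field.
by apply/matrixP => i j; rewrite !mxE mul0r !subr0 mulr1 addr0 mulrAC.
Qed.

Definition line_ffn H (c0 : R) (c t : 'I_H -> R) : mlp2 R 2 H 2 :=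
  MLP2 (\matrix_(i < 2, j < H) (i == ord0)%:R) (\row_j (- t j))
       (\matrix_(j < H, i < 2) (c j * line_dir 0 i)) (c0 *: line_dir).

Lemma line_ffn_apply H c0 (c t : 'I_H -> R) y :
  mlp_apply (line_ffn c0 c t) (y *: line_dir) =
  (c0 + \sum_(j < H) c j * relu (y - t j)) *: line_dir.
Proof.
apply/matrixP => i i'; rewrite !mxE mulrDl addrC mulr_suml; congr (_ + _).
apply: eq_bigr => j _; rewrite !mxE !big_ord_recr big_ord0 /= !mxE /=.
have -> : 0 + y * 1 * 1 + y * -1 * 0 + - t j = y - t j by ring.
by rewrite /relu; ring.
Qed.

(* [relu a - relu (- a) = a]: the stem passes the distance through unchanged. *)
Definition id_stem : mlp2 R 1 2 1 :=
  MLP2 (\row_(j < 2) (if j == ord0 then 1 else -1)) 0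
       (\col_(j < 2) (if j == ord0 then 1 else -1)) 0.

Lemma id_stem_apply (a : R) : mlp_apply id_stem (\row_(_ < 1) a) 0 0 = a.
Proof.
rewrite !mxE !big_ord_recr big_ord0 /= !mxE /= !big_ord_recr !big_ord0 /= !mxE /=.
rewrite !add0r !addr0 !mulr1 !mulrN1.
have [a_ge0|a_lt0] := lerP 0 a.
  by rewrite max_r ?subr0 // oppr_le0.
by rewrite max_l ?sub0r ?opprK // oppr_ge0 ltW.
Qed.

(* Zero queries and keys make the softmax uniform, so the head averages [Phi (p_ij) * y_j]. *)
Definition uniform_head (Phi : R -> R) : Defs.head R 2 1 1 1 :=
  Head 0 0 (\matrix_(i < 2, j < 1) (i == ord0)%:R) line_dir
       (fun p => Phi (p 0 0)) (fun _ => 0).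

Lemma uniform_head_apply N Phi (y : 'I_N -> R) (P : 'I_N -> 'I_N -> 'rV[R]_1) i :
  (0 < N)%N ->
  head_apply (uniform_head Phi) (fun j => y j *: line_dir) P i =
  (\sum_(j < N) Phi (P i j 0 0) * y j / N%:R) *: line_dir.
Proof.
move=> N_gt0; rewrite /head_apply /dotr /=.
have uniform (v : 'rV[R]_2) : expR ((0 *m (v *m (0 : 'M_(2, 1)))^T) 0 0 / Num.sqrt 2 -
    (v *m 0 *m (v *m (0 : 'M_(2, 1)))^T) 0 0 / (2 * Num.sqrt 2) + 0) = 1.
  by rewrite mulmx0 trmx0 !mul0mx !mxE !mul0r subr0 addr0 expR0.
rewrite mulmx0 scaler_suml; apply: eq_bigr => j _.
under eq_bigr => j' _ do rewrite uniform.
rewrite uniform sumr_const card_ord -!scalemxAl scalerA.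
have -> : line_dir *m \matrix_(i < 2, j < 1) (i == ord0)%:R *m line_dir = line_dir.
  apply/matrixP => i' j'; rewrite !mxE big_ord1 !mxE !big_ord_recr big_ord0 /= !mxE /=.
  by ring.
by congr (_ *: _); field; rewrite pnatr_eq0 -lt0n.
Qed.

Lemma nil_heads_apply N (Y : 'I_N -> 'rV[R]_2) (P : 'I_N -> 'I_N -> 'rV[R]_1) i :
  \sum_(hd <- [::] : seq (Defs.head R 2 1 1 1)) head_apply hd Y P i = 0 *: line_dir.
Proof. by rewrite big_nil scale0r. Qed.

Definition line_readout : mlp2 R 2 1 1 :=
  MLP2 (\col_(i < 2) (i == ord0)%:R) 0 1 0.

Lemma line_readout_apply (S : R) :
  mlp_apply line_readout (S *: line_dir) = \row_(_ < 1) relu S.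
Proof.
apply/matrixP => i j; rewrite !mxE big_ord1 !mxE !big_ord_recr big_ord0 /= !mxE /=.
by rewrite !ord1 !add0r !addr0 !mulr1 mulr0 addr0.
Qed.

Definition line_layer H (hs : seq (Defs.head R 2 1 1 1)) (f : mlp2 R 2 H 2) :=
  Layer line_norm hs line_norm f.

Lemma line_layer_apply N H hs (f : mlp2 R 2 H 2) (P : 'I_N -> 'I_N -> 'rV[R]_1)
    (z A : 'I_N -> R) :
  (forall i, \sum_(hd <- hs) head_apply hd (fun j => squash (z j) *: line_dir) P i =
             A i *: line_dir) ->
  layer_apply (line_layer hs f) P (fun i => z i *: line_dir) =
  (fun i => (z i + A i) *: line_dir + mlp_apply f (squash (z i + A i) *: line_dir)).
Proof.
move=> heads; apply: functional_extensionality => i; rewrite /layer_apply /=.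
have -> : (fun j => ln_apply line_norm (z j *: line_dir)) = (fun j => squash (z j) *: line_dir).
  by apply: functional_extensionality => j; rewrite line_norm_apply.
by rewrite heads -scalerDl line_norm_apply.
Qed.

(* The residual stream carries [x], so the feed-forward block must add [g x - x]; its
   argument [squash x] determines [x]. *)
Lemma line_ffn_interpolation (g : R -> R) (xs : seq R) H : (3 * size xs <= H)%N ->
  exists f : mlp2 R 2 H 2,
    {in xs, forall x, x *: line_dir + mlp_apply f (squash x *: line_dir) = g x *: line_dir}.
Proof.
rewrite -(size_map squash) => size_H.
have [c0 [c [t interp]]] :=
  relu_interpolation_ord (fun y => g (unsquash y) - unsquash y) size_H.
exists (line_ffn c0 c t) => x x_in.
by rewrite line_ffn_apply interp ?map_f // squashK -scalerDl addrC subrK.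
Qed.

End LineTokens.

Section BaseExpansion.
Variable B : nat.

Definition decr_pos (s : seq nat) := [seq x.-1 | x <- s & (0 < x)%N].

Lemma sum_expn_decr_pos s :
  (\sum_(x <- s) B ^ x = count_mem 0%N s + B * \sum_(x <- decr_pos s) B ^ x)%N.
Proof.
elim: s => [|[|x] s IH]; first by rewrite /decr_pos !big_nil muln0.
  by rewrite big_cons IH expn0 /= addnA.
by rewrite big_cons IH /decr_pos /= big_cons expnS mulnDr addnCA.
Qed.

Lemma count_decr_pos e s : count_mem e.+1 s = count_mem e (decr_pos s).
Proof. by elim: s => [|[|x] s IH] //=; rewrite IH. Qed.

Lemma size_decr_pos s : (size (decr_pos s) <= size s)%N.
Proof. by rewrite size_map size_filter count_size. Qed.

(* Fewer than [B] summands: the multiplicities are the base-[B] digits of the sum. *)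
Lemma sum_expn_perm_eq (s t : seq nat) : (size s < B)%N -> (size t < B)%N ->
  (\sum_(x <- s) B ^ x = \sum_(x <- t) B ^ x)%N -> perm_eq s t.
Proof.
move=> size_s size_t eq_sum; apply/allP => e _; apply/eqP.
elim: e s t size_s size_t eq_sum => [|e IH] s t size_s size_t;
  rewrite (sum_expn_decr_pos s) (sum_expn_decr_pos t) => eq_sum.
all: have B_gt0 : (0 < B)%N by apply: leq_ltn_trans size_s.
all: have cs : (count_mem 0%N s < B)%N by apply: leq_ltn_trans (count_size _ _) size_s.
all: have ct : (count_mem 0%N t < B)%N by apply: leq_ltn_trans (count_size _ _) size_t.
all: rewrite ![(B * _)%N]mulnC !(addnC (count_mem _ _)) in eq_sum.
  by move: (congr1 (modn^~ B) eq_sum); rewrite !modnMDl !modn_small.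
move: (congr1 (divn^~ B) eq_sum); rewrite !divnMDl // !divn_small // !addn0 => eq_sum'.
rewrite !count_decr_pos; apply: IH eq_sum'.
  exact: leq_ltn_trans (size_decr_pos s) size_s.
exact: leq_ltn_trans (size_decr_pos t) size_t.
Qed.

End BaseExpansion.

Lemma perm_eq_map_ord (T : eqType) N (f g : 'I_N -> T) :
  perm_eq [seq f i | i <- enum 'I_N] [seq g i | i <- enum 'I_N] ->
  exists s : 'I_N -> 'I_N, bijective s /\ forall i, g (s i) = f i.
Proof.
rewrite -val_ord_tuple => /(@tuple_permP T N _ [tuple g i | i < N])[p eq_fg].
exists p; split; first exact: (injF_bij (@perm_inj _ p)).
move=> i; have eq_t : [tuple f i | i < N] = [tuple tnth [tuple g i | i < N] (p i) | i < N].
  exact: val_inj.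
by move: (congr1 (fun t => tnth t i) eq_t); rewrite !tnth_mktuple.
Qed.

Lemma sum_expn_ord_bij B N (f g : 'I_N -> nat) : (N < B)%N ->
  (\sum_(i < N) B ^ f i = \sum_(i < N) B ^ g i)%N ->
  exists s : 'I_N -> 'I_N, bijective s /\ forall i, g (s i) = f i.
Proof.
move=> N_lt_B.
have enum_sum (h : 'I_N -> nat) :
  (\sum_(i < N) B ^ h i = \sum_(x <- [seq h i | i <- enum 'I_N]) B ^ x)%N.
  by rewrite big_map big_enum.
rewrite !enum_sum => eq_sum.
by apply/perm_eq_map_ord/(sum_expn_perm_eq _ _ eq_sum); rewrite size_map size_enum_ord.
Qed.

Lemma addn_mul_inj C i1 i2 c1 c2 : (c1 < C)%N -> (c2 < C)%N ->
  (C * i1 + c1 = C * i2 + c2)%N -> i1 = i2 /\ c1 = c2.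
Proof.
move=> c1_lt c2_lt eq12; have C_gt0 : (0 < C)%N by apply: leq_ltn_trans c1_lt.
rewrite ![(C * _)%N]mulnC in eq12; split.
  by move: (congr1 (divn^~ C) eq12); rewrite !divnMDl // !divn_small // !addn0.
by move: (congr1 (modn^~ C) eq12); rewrite !modnMDl !modn_small.
Qed.

Section SeparatingProjection.
Variable R : numDomainType.

Lemma exists_nonroot (q : {poly R}) : q != 0 -> exists t, ~~ root q t.
Proof.
move=> q_neq0; pose ts := [seq i%:R : R | i <- iota 0 (size q)].
have [all_roots|/allPn[t _ not_root]] := boolP (all (root q) ts); last by exists t.
have uniq_ts : uniq ts by rewrite map_inj_uniq ?iota_uniq // => i j /eqP; rewrite eqr_nat => /eqP.
by move: (max_poly_roots q_neq0 all_roots uniq_ts); rewrite size_map size_iota ltnn.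
Qed.

Definition diff_poly k (x y : 'rV[R]_k) : {poly R} :=
  \poly_(i < k) oapp (fun j : 'I_k => (x - y) 0 j) 0 (insub i).

Lemma diff_poly_eq0 k (x y : 'rV[R]_k) : (diff_poly x y == 0) = (x == y).
Proof.
apply/eqP/eqP => [eq0|->]; last first.
  by apply/polyP => i; rewrite coef_poly coef0 subrr; case: insub => [j|] /=; rewrite ?mxE ?if_same.
apply/rowP => i; apply/eqP; rewrite -subr_eq0.
have := congr1 (fun p : {poly R} => p`_i) eq0.
by rewrite coef_poly ltn_ord coef0 valK /= !mxE => ->.
Qed.

Lemma horner_diff_poly k (x y : 'rV[R]_k) t :
  (diff_poly x y).[t] = ((x - y) *m \col_(i < k) t ^+ i) 0 0.
Proof. by rewrite horner_poly !mxE; apply: eq_bigr => i _; rewrite valK /= !mxE. Qed.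

(* The witness is the moment vector (t ^+ i)_i at a non-root t of the product of all the
   difference polynomials. *)
Lemma exists_separating_col k (xs : seq 'rV[R]_k) :
  exists w : 'cV[R]_k, {in xs &, injective (fun x => (x *m w) 0 0)}.
Proof.
pose q := \prod_(pr <- [seq (x, y) | x <- xs, y <- xs] | pr.1 != pr.2) diff_poly pr.1 pr.2.
have q_neq0 : q != 0.
  by rewrite prodf_seq_neq0; apply/allP => pr _; apply/implyP; rewrite diff_poly_eq0.
have [t not_root] := exists_nonroot q_neq0.
exists (\col_(i < k) t ^+ i) => x y x_in y_in eq_xy; apply/eqP/negPn/negP => neq_xy.
move: not_root; rewrite /root /q horner_prod prodf_seq_neq0 => /allP/(_ (x, y)).
rewrite allpairs_f // => /(_ isT)/implyP/(_ neq_xy).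
by rewrite horner_diff_poly mulmxBl mxE eq_xy !mxE addrN eqxx.
Qed.

End SeparatingProjection.

Lemma natr_frac_inj (R : realFieldType) (m n : nat) (x y : R) :
  0 <= x < 1 -> 0 <= y < 1 -> x + m%:R = y + n%:R -> m = n.
Proof.
move=> /andP[x_ge0 x_lt1] /andP[y_ge0 y_lt1] eq_xy.
have [lt_mn|lt_nm|//] := ltngtP m n; exfalso.
  have : m%:R + 1 <= n%:R :> R by rewrite natr1 ler_nat.
  lra.
have : n%:R + 1 <= m%:R :> R by rewrite natr1 ler_nat.
lra.
Qed.

Lemma ppgt_counts_nodes (R : realType) (d : gdist R) k (G1 G2 : agraph R k) :
  ag_n G1 != ag_n G2 -> exists M : ppgt R k, ppgt_distinguishes d M G1 G2.
Proof.
move=> n_neq; have [f f_one] := @line_ffn_interpolation R (fun _ => 1) [:: 0] 3 isT.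
pose M := PPGT (0 : 'M[R]_(k, 2)) (id_stem R) [:: line_layer [::] f] (line_readout R).
have out G : ppgt_output d M G = \row_(_ < 1) relu (ag_n G)%:R.
  rewrite /ppgt_output /=.
  have -> : (fun i => @ag_x R k G i *m (0 : 'M[R]_(k, 2))) = (fun i => 0 *: line_dir R).
    by apply: functional_extensionality => i; rewrite mulmx0 scale0r.
  rewrite (@line_layer_apply R _ 3 [::] f _ _ (fun _ => 0)); last exact: nil_heads_apply.
  by rewrite addr0 f_one ?inE // sumr_const card_ord scalerMnl line_readout_apply.
exists M; rewrite /ppgt_distinguishes !out => /matrixP/(_ 0 0); rewrite !mxE !relu_id ?ler0n //.
by move/eqP; rewrite eqr_nat; apply/negP.
Qed.

Section WLSimulation.
Variables (R : realType) (d : gdist R) (k N : nat).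
Variables (g : bool -> graph N) (x : bool -> 'I_N -> 'rV[R]_k).
Hypothesis N_gt0 : (0 < N)%N.

Local Notation G b := (@AGraph R k N (g b) (x b)).
Local Notation ev := (line_dir R).
Local Notation B := N.+1.
Local Notation H := (6 * N)%N.

Definition rel_pe b (i j : 'I_N) := mlp_apply (id_stem R) (\row_(_ < 1) d (g b) i j).

Definition node_vals (T : Type) (f : bool -> 'I_N -> T) :=
  [seq f p.1 p.2 | p <- enum {: bool * 'I_N}].

Lemma mem_node_vals (T : eqType) (f : bool -> 'I_N -> T) b u : f b u \in node_vals f.
Proof. by apply: (map_f (fun p => f p.1 p.2) (x := (b, u))); rewrite mem_enum. Qed.

Lemma size_node_vals T (f : bool -> 'I_N -> T) : size (node_vals f) = (2 * N)%N.
Proof. by rewrite size_map -cardE card_prod card_bool card_ord. Qed.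

Definition dist_vals := [seq d (g p.1) p.2.1 p.2.2 | p <- enum {: bool * ('I_N * 'I_N)}].

Lemma mem_dist_vals b u w : d (g b) u w \in dist_vals.
Proof.
by apply: (map_f (fun p => d (g p.1) p.2.1 p.2.2) (x := (b, (u, w)))); rewrite mem_enum.
Qed.

Lemma exists_layer_of_fun (hs : seq (Defs.head R 2 1 1 1)) (z A : bool -> 'I_N -> R)
    (f : R -> R) :
  (forall b i, \sum_(hd <- hs) head_apply hd (fun j => squash (z b j) *: ev) (rel_pe b) i =
               A b i *: ev) ->
  exists ly : layer R 2 1 1 1 H, forall b,
    layer_apply ly (rel_pe b) (fun i => z b i *: ev) = (fun i => f (z b i + A b i) *: ev).
Proof.
move=> heads; pose vs := node_vals (fun b i => z b i + A b i).
have size_H : (3 * size vs <= H)%N by rewrite size_node_vals mulnA.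
have [ffn interp] := line_ffn_interpolation f size_H.
exists (line_layer hs ffn) => b; rewrite (line_layer_apply _ (heads b)).
by apply: functional_extensionality => i; rewrite interp ?mem_node_vals.
Qed.

(* The factor [2] keeps [code C c] in [0, 1), so adding a natural number to it is invertible. *)
Definition code_scale C : R := (2 * B%:R ^+ C)^-1.
Definition code C c := unsquash (code_scale C * B%:R ^+ c).

Lemma code_scale_gt0 C : 0 < code_scale C.
Proof. by rewrite invr_gt0 mulr_gt0 // exprn_gt0 // ltr0n. Qed.

Lemma code_scale_bound C c : (c < C)%N -> 0 < code_scale C * B%:R ^+ c <= 2^-1.
Proof.
move=> c_lt; rewrite mulr_gt0 ?code_scale_gt0 ?exprn_gt0 ?ltr0n //=.
rewrite /code_scale invfM -mulrA ler_piMr ?invr_ge0 ?ler0n // mulrC.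
by rewrite ler_pdivrMr ?exprn_gt0 ?ltr0n // mul1r -!natrX ler_nat leq_exp2l // ltnW.
Qed.

Lemma squash_code C c : (c < C)%N -> squash (code C c) = code_scale C * B%:R ^+ c.
Proof.
move=> /code_scale_bound/andP[pos le_half]; rewrite unsquashK // gtr0_norm //.
by apply: le_lt_trans le_half _; lra.
Qed.

Lemma code_range C c : (c < C)%N -> 0 <= code C c < 1.
Proof.
move=> /code_scale_bound/andP[pos le_half]; rewrite /code /unsquash.
set y := code_scale C * _ in pos le_half *.
have y2 : 0 < 1 - y ^+ 2 by nra.
have s_gt0 : 0 < Num.sqrt (1 - y ^+ 2) by rewrite sqrtr_gt0.
have s2 : Num.sqrt (1 - y ^+ 2) ^+ 2 = 1 - y ^+ 2 by rewrite sqr_sqrtr // ltW.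
rewrite divr_ge0 ?ltW //= ltr_pdivrMr // mul1r.
set s := Num.sqrt _ in s_gt0 s2 *; nra.
Qed.

Lemma code_inj C c1 c2 : (c1 < C)%N -> (c2 < C)%N -> code C c1 = code C c2 -> c1 = c2.
Proof.
move=> c1_lt c2_lt /(congr1 squash); rewrite !squash_code //.
move=> /(mulfI (lt0r_neq0 (code_scale_gt0 C)))/eqP.
by rewrite -!natrX eqr_nat eqn_exp2l // => /eqP.
Qed.

Lemma exists_recoding_layer (hs : seq (Defs.head R 2 1 1 1)) (z A : bool -> 'I_N -> R) :
  (forall b i, \sum_(hd <- hs) head_apply hd (fun j => squash (z b j) *: ev) (rel_pe b) i =
               A b i *: ev) ->
  exists (ly : layer R 2 1 1 1 H) C (col : bool -> 'I_N -> nat),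
  [/\ forall b u, (col b u < C)%N,
      forall b, layer_apply ly (rel_pe b) (fun i => z b i *: ev) = (fun u => code C (col b u) *: ev)
    & forall u v, col true u = col false v -> z true u + A true u = z false v + A false v].
Proof.
move=> heads; pose zA b u := z b u + A b u; pose vs := node_vals zA.
have [ly ly_eq] := exists_layer_of_fun (fun y => code (size vs) (index y vs)) heads.
exists ly, (size vs), (fun b u => index (zA b u) vs); split => //.
  by move=> b u; rewrite index_mem mem_node_vals.
by move=> u v; apply: (index_inj 0 (mem_node_vals zA true u) (mem_node_vals zA false v)).
Qed.

Definition run (E : 'M[R]_(k, 2)) (ls : seq (layer R 2 1 1 1 H)) b :=
  foldl (fun X ly => layer_apply ly (rel_pe b) X) (fun u => x b u *m E) ls.

Definition wl_coded l E ls C (col : bool -> 'I_N -> nat) :=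
  [/\ forall b u, (col b u < C)%N,
      forall b, run E ls b = (fun u => code C (col b u) *: ev)
    & forall u v, col true u = col false v -> wl_same d (G1 := G true) (G2 := G false) l u v].

Lemma wl_coded_base (w : 'cV[R]_k) : {in node_vals x &, injective (fun y => (y *m w) 0 0)} ->
  exists ly C col, wl_coded 0 (w *m ev) [:: ly] C col.
Proof.
move=> w_sep; pose z b u : R := (x b u *m w) 0 0.
have [ly [C [col [col_lt ly_eq col_eq]]]] :=
  exists_recoding_layer (z := z) (A := fun _ _ => 0) (fun b => nil_heads_apply _ _).
exists ly, C, col; split; [exact: col_lt | move=> b | move=> u v /col_eq].
  rewrite /run /= -ly_eq; congr layer_apply; apply: functional_extensionality => u.
  by rewrite mulmxA [x b u *m w]mx11_scalar mul_scalar_mx.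
by rewrite !addr0 => /w_sep; apply; apply: mem_node_vals.
Qed.

(* The digits [C * index (d u w) + col w] are distinct for distinct pairs, and fewer than [B]
   of them are summed. *)
Definition agg_weight C (t : R) := N%:R / code_scale C * B%:R ^+ (C * index t dist_vals).
Definition agg C (col : bool -> 'I_N -> nat) b u :=
  (\sum_(w < N) B ^ (C * index (d (g b) u w) dist_vals + col b w))%N.

Lemma agg_head C col : (forall b u, col b u < C)%N -> forall b i,
  \sum_(hd <- [:: uniform_head (agg_weight C)])
     head_apply hd (fun j => squash (code C (col b j)) *: ev) (rel_pe b) i =
   (agg C col b i)%:R *: ev.
Proof.
move=> col_lt b i; rewrite big_seq1 uniform_head_apply // natr_sum; congr (_ *: _).
apply: eq_bigr => j _; rewrite /rel_pe id_stem_apply squash_code // /agg_weight natrX exprD.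
by field; rewrite pnatr_eq0 -lt0n N_gt0 lt0r_neq0 ?code_scale_gt0.
Qed.

Lemma agg_inj C col u v : (forall b u, col b u < C)%N -> agg C col true u = agg C col false v ->
  exists s : 'I_N -> 'I_N, bijective s /\
    forall w, d (g true) u w = d (g false) v (s w) /\ col true w = col false (s w).
Proof.
move=> col_lt /sum_expn_ord_bij[// | s [s_bij eq_digits]]; exists s; split=> // w.
have [/esym eq_idx /esym eq_col] := addn_mul_inj (col_lt _ _) (col_lt _ _) (eq_digits w).
by split=> //; apply: (index_inj 0 (mem_dist_vals _ _ _) (mem_dist_vals _ _ _) eq_idx).
Qed.

Lemma wl_coded_step l E ls C col : wl_coded l E ls C col ->
  exists ly C' col', wl_coded l.+1 E (rcons ls ly) C' col'.
Proof.
case=> col_lt run_eq col_wl.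
have [ly [C' [col' [col'_lt ly_eq col'_eq]]]] := exists_recoding_layer (agg_head col_lt).
exists ly, C', col'; split; [exact: col'_lt | move=> b | move=> u v /col'_eq eq_tok].
  by rewrite /run foldl_rcons -/(run E ls b) run_eq ly_eq.
have eq_agg := natr_frac_inj (code_range (col_lt _ _)) (code_range (col_lt _ _)) eq_tok.
have [s [s_bij match_s]] := agg_inj col_lt eq_agg.
by exists s; split=> // w; have [eq_d eq_col] := match_s w; split=> //; apply: col_wl.
Qed.

Lemma wl_coded_exists (w : 'cV[R]_k) : {in node_vals x &, injective (fun y => (y *m w) 0 0)} ->
  forall l, exists ls C col, wl_coded l (w *m ev) ls C col.
Proof.
move=> w_sep; elim=> [|l [ls [C [col coded]]]].
  by have [ly [C [col coded]]] := wl_coded_base w_sep; exists [:: ly], C, col.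
by have [ly [C' [col' coded']]] := wl_coded_step coded; exists (rcons ls ly), C', col'.
Qed.

Definition codes C := [seq code C c | c <- iota 0 C].

Lemma index_code C c : (c < C)%N -> index (code C c) (codes C) = c.
Proof.
move=> c_lt; have -> : code C c = nth 0 (codes C) c by rewrite (nth_map 0%N) ?size_iota ?nth_iota.
rewrite index_uniq ?size_map ?size_iota // map_inj_in_uniq ?iota_uniq // => c1 c2.
by rewrite !mem_iota !add0n => /andP[_ ?] /andP[_ ?]; apply: code_inj.
Qed.

Lemma ppgt_distinguishes_of_not_wl_same L : ~ wl_graph_same d (G true) (G false) L ->
  exists M : ppgt R k, ppgt_distinguishes d M (G true) (G false).
Proof.
move=> not_same; have [w w_sep] := exists_separating_col (node_vals x).
have [ls [C [col [col_lt run_eq col_wl]]]] := wl_coded_exists w_sep L.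
have [ly ly_eq] := exists_layer_of_fun (z := fun b u => code C (col b u)) (A := fun _ _ => 0)
  (fun y => (B ^ index y (codes C))%:R) (fun b => nil_heads_apply _ _).
pose M := PPGT (w *m ev) (id_stem R) (rcons ls ly) (line_readout R).
have out b : ppgt_output d M (G b) = \row_(_ < 1) relu (\sum_(u < N) (B ^ col b u)%:R).
  have -> : ppgt_output d M (G b) =
      mlp_apply (line_readout R) (\sum_(i < N) run (w *m ev) (rcons ls ly) b i) by [].
  rewrite /run foldl_rcons -/(run _ ls b) run_eq ly_eq -scaler_suml line_readout_apply.
  by under eq_bigr => u _ do rewrite addr0 index_code //.
exists M; rewrite /ppgt_distinguishes !out => /matrixP/(_ 0 0).
rewrite !mxE !relu_id ?sumr_ge0 // -!natr_sum => /eqP; rewrite eqr_nat => /eqP.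
case/sum_expn_ord_bij => [//|s [s_bij eq_col]].
by apply: not_same; exists s; split=> // u; apply: col_wl; rewrite eq_col.
Qed.

End WLSimulation.

Theorem proposition1 (R : realType) (d : gdist R) (n k : nat) :
  is_gen_dist d ->
  forall G1 G2 : agraph R k,
    (ag_n G1 <= n)%N -> (ag_n G2 <= n)%N ->
    gdwl_distinguishes d G1 G2 ->
    exists M : ppgt R k, ppgt_distinguishes d M G1 G2.
Proof.
move=> _ G1 G2 _ _ [L not_same].
have [eq_n|neq_n] := eqVneq (ag_n G1) (ag_n G2); last exact: ppgt_counts_nodes.
case: G1 G2 eq_n not_same => [N g1 x1] [N' g2 x2] /= eq_n not_same; subst N'.
have [N0|N_gt0] := posnP N.
  by subst N; case: not_same; exists id; split; [exists id | case].
exact: (ppgt_distinguishes_of_not_wl_same (g := fun b => if b then g1 else g2)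
          (x := fun b => if b then x1 else x2) N_gt0 not_same).
Qed.
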